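(* Let $\mu$ be a Borel probability measure on $\mathbb{R}^d$, $p$ a probability density with respect to $\mu$, and $Q$ a probability density on $\mathbb{R}^d$ with respect to Lebesgue measure. Let $x\sim p\,d\mu$ and $w\sim Q$ be independent and $\tilde x=x+w$, and let $p(\cdot\mid\tilde x)$ denote the conditional (deconvolution) density of $x$ given $\tilde x$ with respect to $\mu$, given by $p(x\mid\tilde x)=p(x)Q(\tilde x-x)/\int Q(\tilde x-x')p(x')\,d\mu(x')$. Fix $\tilde x,\tilde x'\in\mathbb{R}^d$ and suppose $\nabla^2Q$ and $\nabla\log Q$ exist and are continuous on $\mathcal{X}=\{(1-t)\tilde x+t\tilde x'-x: x\in\operatorname{supp}p,\ t\in[0,1]\}$. Then \[ \mathrm{TV}\big(p(\cdot\mid\tilde x),p(\cdot\mid\tilde x')\big)\le\|\tilde x-\tilde x'\|\cdot\sup_{z\in\mathcal{X}}\|\nabla\log Q(z)\|. \]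
   Context: $\operatorname{supp}p$ is the support of the measure $p\,d\mu$ (closure of the set of points all of whose open neighborhoods have positive measure). $\mathrm{TV}$ is total variation distance. *)

From HB Require Import structures.
From mathcomp Require Import all_boot all_order all_algebra.
From mathcomp Require Import all_classical all_reals all_analysis.
Set Implicit Arguments.
Unset Strict Implicit.
Unset Printing Implicit Defensive.
Import Order.TTheory GRing.Theory Num.Theory.
Import numFieldNormedType.Exports.
Local Open Scope classical_set_scope.
Local Open Scope ring_scope.

Definition Rd (R : realType) (d : nat) := g_sigma_algebraType (@open 'rV[R]_d).

Definition evec (R : realType) (d : nat) (i : 'I_d) : 'rV[R]_d := delta_mx 0 i.

Definition enorm (R : realType) (d : nat) (v : 'rV[R]_d) : R :=
  Num.sqrt (\sum_(i < d) (v 0 i) ^+ 2).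

Definition grad (R : realType) (d : nat) (f : 'rV[R]_d -> R) (x : 'rV[R]_d)
  : 'rV[R]_d := \row_(i < d) derive f x (evec R i).

Definition hess (R : realType) (d : nat) (f : 'rV[R]_d -> R) (x : 'rV[R]_d)
  : 'M[R]_d :=
  \matrix_(i < d, j < d) derive (fun y => derive f y (evec R i)) x (evec R j).

Definition supp (R : realType) (d : nat) (mu : {measure set (Rd R d) -> \bar R})
  (p : 'rV[R]_d -> R) : set 'rV[R]_d :=
  closure [set x : 'rV[R]_d | forall U : set 'rV[R]_d, open U -> U x ->
             (0 < \int[mu]_(y in (U : set (Rd R d))) (p y)%:E)%E].

Definition normc (R : realType) (d : nat) (mu : {measure set (Rd R d) -> \bar R})
  (p Q : 'rV[R]_d -> R) (xt : 'rV[R]_d) : \bar R :=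
  \int[mu]_x (Q (xt - x) * p x)%:E.

Definition cond_dens (R : realType) (d : nat) (mu : {measure set (Rd R d) -> \bar R})
  (p Q : 'rV[R]_d -> R) (xt : 'rV[R]_d) (x : 'rV[R]_d) : R :=
  p x * Q (xt - x) / fine (normc mu p Q xt).

Definition TV (R : realType) (d : nat) (mu : {measure set (Rd R d) -> \bar R})
  (f g : 'rV[R]_d -> R) : \bar R :=
  ereal_sup [set `| (\int[mu]_(x in A) (f x)%:E - \int[mu]_(x in A) (g x)%:E)%E |%E
            | A in (@measurable _ (Rd R d))].

Definition Xset (R : realType) (d : nat) (mu : {measure set (Rd R d) -> \bar R})
  (p : 'rV[R]_d -> R) (xt xt' : 'rV[R]_d) : set 'rV[R]_d :=
  [set z | exists x t, supp mu p x /\ 0 <= t <= 1 /\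
                       z = (1 - t) *: xt + t *: xt' - x].

Set Warnings "-notation-overridden,-ambiguous-paths,-notation-incompatible-prefix".
From HB Require Import structures.
From mathcomp Require Import all_boot all_order all_algebra.
From mathcomp Require Import all_classical all_reals all_analysis.
From mathcomp Require Import measurable_realfun ring lra.
Import Order.TTheory GRing.Theory Num.Theory.
Import numFieldNormedType.Exports.
Local Open Scope classical_set_scope.
Local Open Scope ring_scope.

(* For x in the support of p, ln Q is Lipschitz on the segment from xt - x to
   xt' - x with constant L = |xt - xt'| * sup_X |grad ln Q|, so Q (xt - x) and
   Q (xt' - x) agree up to the factor rho = e^L.  Integrating against p dmu, the
   unnormalised posterior masses of any set A, and of its complement, agree up
   to rho as well; an elementary inequality then bounds the difference of the
   normalised masses by 1 - 1/rho <= L. *)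

Lemma cross_diff_le (R : realFieldType) (u v u' v' rho : R) :
  0 <= u -> 0 <= v -> 0 <= u' -> 0 <= v' -> 1 <= rho ->
  u <= rho * u' -> v' <= rho * v ->
  rho * (u * v' - u' * v) <= (rho - 1) * (u + v) * (u' + v').
Proof.
move=> u0 v0 u'0 v'0 rho1 uu' v'v.
have uu'0 : 0 <= (rho - 1) * (u * u') by rewrite !mulr_ge0 //; lra.
have vv'0 : 0 <= (rho - 1) * (v * v') by rewrite !mulr_ge0 //; lra.
have u'v0 : 0 <= (2 * rho - 1) * (u' * v) by rewrite !mulr_ge0 //; lra.
have [small|large] := lerP u ((rho - 1) * v).
- have : 0 <= v' * ((rho - 1) * v - u) by rewrite mulr_ge0 // subr_ge0.
  lra.
- have : 0 <= (rho * u' - u) * ((rho - 1) * u + (2 * rho - 1) * v).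
    by apply: mulr_ge0; [lra | apply: addr_ge0; apply: mulr_ge0 => //; lra].
  have : 0 <= (rho * v - v') * (rho * u) by rewrite mulr_ge0 ?subr_ge0 // mulr_ge0 //; lra.
  have : 0 <= (rho - 1) * u * (u - (rho - 1) * v) by rewrite !mulr_ge0 //; lra.
  nra.
Qed.

Lemma ratio_frac_sub_le (R : realFieldType) (u v u' v' rho : R) :
  0 <= u -> 0 <= v -> 0 <= u' -> 0 <= v' -> 1 <= rho ->
  u <= rho * u' -> v' <= rho * v ->
  u / (u + v) - u' / (u' + v') <= 1 - rho^-1.
Proof.
move=> u0 v0 u'0 v'0 rho1 uu' v'v.
have rho_inv_le1 : 0 <= 1 - rho^-1 by rewrite subr_ge0 invf_le1 //; lra.
(* Vanishing denominators need no assumption: x / 0 = 0. *)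
have [uv0|uv_neq0] := eqVneq (u + v) 0.
  have -> : u = 0 by lra.
  rewrite mul0r sub0r; apply: le_trans rho_inv_le1.
  by rewrite oppr_le0 divr_ge0 // addr_ge0.
have [u'v'0|u'v'_neq0] := eqVneq (u' + v') 0.
  have -> : u = 0 by nra.
  by rewrite mul0r u'v'0 invr0 mulr0 subr0.
have -> : u / (u + v) - u' / (u' + v') =
    1 - rho^-1 - ((rho - 1) * (u + v) * (u' + v') - rho * (u * v' - u' * v))
                 / (rho * (u + v) * (u' + v')).
  by field; rewrite u'v'_neq0 uv_neq0 gt_eqF //; lra.
rewrite gerBl divr_ge0 ?subr_ge0 ?cross_diff_le //.
by rewrite !mulr_ge0 ?addr_ge0 //; lra.
Qed.

Section normalized_Rintegral.
Context {dT : measure_display} {T : measurableType dT} {R : realType}.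
Variable mu : {measure set T -> \bar R}.

Lemma ae_ge0_le_Rintegral (D : set T) (f1 f2 : T -> R) : measurable D ->
  mu.-integrable D (EFin \o f1) -> mu.-integrable D (EFin \o f2) ->
  (forall x, D x -> 0 <= f1 x) -> (forall x, D x -> 0 <= f2 x) ->
  {ae mu, forall x, D x -> f1 x <= f2 x} ->
  \int[mu]_(x in D) f1 x <= \int[mu]_(x in D) f2 x.
Proof.
move=> mD if1 if2 f1_ge0 f2_ge0 f12.
apply: fine_le; [exact: integrable_fin_num if1|exact: integrable_fin_num if2|].
apply: ae_ge0_le_integral => //.
- exact: measurable_int if1.
- exact: measurable_int if2.
Qed.

Lemma Rintegral_ratio_sub_le (f g : T -> R) (rho : R) (A : set T) :
  mu.-integrable setT (EFin \o f) -> mu.-integrable setT (EFin \o g) ->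
  (forall x, 0 <= f x) -> (forall x, 0 <= g x) -> 1 <= rho ->
  {ae mu, forall x, f x <= rho * g x} -> {ae mu, forall x, g x <= rho * f x} ->
  measurable A ->
  \int[mu]_(x in A) f x / \int[mu]_x f x - \int[mu]_(x in A) g x / \int[mu]_x g x
    <= 1 - rho^-1.
Proof.
move=> f_int g_int f_ge0 g_ge0 rho_ge1 fg gf mA.
have mAC : measurable (~` A) by exact: measurableC.
have splitC h : mu.-integrable setT (EFin \o h) ->
    \int[mu]_x h x = \int[mu]_(x in A) h x + \int[mu]_(x in ~` A) h x.
  move=> h_int; rewrite -Rintegral_setU ?setUv //; exact/disj_setPCl.
have le_scaled h k B : measurable B -> mu.-integrable setT (EFin \o h) ->
    mu.-integrable setT (EFin \o k) -> (forall x, 0 <= h x) -> (forall x, 0 <= k x) ->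
    {ae mu, forall x, h x <= rho * k x} ->
    \int[mu]_(x in B) h x <= rho * \int[mu]_(x in B) k x.
  move=> mB h_int k_int h_ge0 k_ge0 hk.
  have kB_int := integrableS measurableT mB (subsetT B) k_int.
  rewrite -RintegralZl //; apply: ae_ge0_le_Rintegral => //.
  - exact: integrableS measurableT mB (subsetT B) h_int.
  - have -> : EFin \o (fun x => rho * k x) = (fun x => rho%:E * (EFin \o k) x)%E.
      by apply/funext => x; rewrite /= EFinM.
    exact: integrableZl.
  - by move=> x _; rewrite mulr_ge0 //; lra.
  - by apply: filterS hk => x + _.
rewrite (splitC f) // (splitC g) //.
apply: ratio_frac_sub_le => //; try by apply: Rintegral_ge0.
- exact: (le_scaled f g).
- exact: (le_scaled g f).
Qed.

End normalized_Rintegral.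

Lemma CauchySchwarz_sum {R : realFieldType} {n : nat} (a b : 'I_n -> R) :
  (\sum_i a i * b i) ^+ 2 <= (\sum_i a i ^+ 2) * (\sum_i b i ^+ 2).
Proof.
have lagrange : \sum_i \sum_j (a i * b j - a j * b i) ^+ 2 =
    \sum_i \sum_j (a i ^+ 2 * b j ^+ 2) + \sum_i \sum_j (b i ^+ 2 * a j ^+ 2)
    - 2 * \sum_i \sum_j (a i * b i * (a j * b j)).
  rewrite mulr_sumr -big_split -sumrB; apply: eq_bigr => i _.
  by rewrite mulr_sumr -big_split -sumrB; apply: eq_bigr => j _ /=; ring.
have : 0 <= \sum_i \sum_j (a i * b j - a j * b i) ^+ 2.
  by apply: sumr_ge0 => i _; apply: sumr_ge0 => j _; exact: sqr_ge0.
rewrite lagrange -!big_distrlr /=; nra.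
Qed.

Section euclidean_norm.
Context {R : realType} {d : nat}.
Implicit Types (a : 'rV[R]_d) (f : 'rV[R]_d -> R).

Lemma enorm_ge0 a : 0 <= enorm a.
Proof. exact: sqrtr_ge0. Qed.

Lemma enormN a : enorm (- a) = enorm a.
Proof. by congr Num.sqrt; apply: eq_bigr => i _; rewrite mxE sqrrN. Qed.

Lemma enorm_eq0 a : (enorm a == 0) = (a == 0).
Proof.
have sqr_entry_ge0 i : 0 <= a 0 i ^+ 2 by exact: sqr_ge0.
rewrite sqrtr_eq0 le_eqVlt ltNge sumr_ge0 // orbF psumr_eq0 //.
apply/allP/eqP => [a0|-> i _]; last by rewrite /= mxE expr2 mulr0.
apply/rowP => j; rewrite mxE; apply/eqP; rewrite -sqrf_eq0.
exact: implyP (a0 j (mem_index_enum j)) isT.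
Qed.

Lemma diff_gradE f (z a : 'rV[R]_d) :
  differentiable f z -> 'd f z a = \sum_j a 0 j * grad f z 0 j.
Proof.
move=> df; rewrite {1}(row_sum_delta a) linear_sum; apply: eq_bigr => j _.
by rewrite linearZ /= mxE -deriveE.
Qed.

Lemma normr_diff_le f (z a : 'rV[R]_d) :
  differentiable f z -> `|'d f z a| <= enorm a * enorm (grad f z).
Proof.
move=> df; rewrite diff_gradE // /enorm -sqrtrM ?sumr_ge0 // => [|i _]; last exact: sqr_ge0.
rewrite -sqrtr_sqr; apply: ler_wsqrtr.
exact: (CauchySchwarz_sum (fun i => a 0 i) (fun i => grad f z 0 i)).
Qed.

End euclidean_norm.

Section segment.
Context {R : realType} {d : nat}.
Implicit Types (a v : 'rV[R]_d) (f : 'rV[R]_d -> R).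

Lemma differentiable_line a v (t : R) : differentiable (fun t : R => a + t *: v) t.
Proof.
apply: differentiableD; first exact: differentiable_cst.
by apply: differentiableZl; exact: ex_diff.
Qed.

Lemma segment_mvt_le f a v (s : R) :
  (forall t, 0 <= t <= 1 -> differentiable f (a + t *: v)) ->
  (forall t, 0 <= t <= 1 -> `|'d f (a + t *: v) v| <= s) ->
  `|f (a + v) - f a| <= s.
Proof.
move=> df dfs.
pose phi t := f (a + t *: v).
have dphi (t : R) : 0 <= t <= 1 -> differentiable phi t.
  by move=> /df dft; exact: differentiable_comp (differentiable_line a v t) dft.
have phi' (t : R) : 0 <= t <= 1 -> derive phi t 1 = 'd f (a + t *: v) v.
  move=> /df dft; rewrite -(deriveE v dft) /derive.
  suff -> : (fun h : R => h^-1 *: ((phi \o shift t) (h *: 1) - phi t)) =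
      (fun h : R => h^-1 *: ((f \o shift (a + t *: v)) (h *: v) - f (a + t *: v))) by [].
  apply: funext => h /=; rewrite /phi /shift /=; congr (_ *: (f _ - _)).
  by rewrite -[h%:A]/(h * 1) mulr1 scalerDl addrCA.
have [c /[!in_itv] /= c01 mvt] : exists2 c, c \in `[0, 1]%R &
    phi 1 - phi 0 = derive phi c 1 * (1 - 0).
  apply: MVT_segment => //.
    move=> t /[!in_itv] /= /andP[t_gt0 t_lt1].
    by apply/derivableP/diff_derivable/dphi; rewrite !ltW.
  apply: continuous_in_subspaceT => t; rewrite inE /= in_itv /= => t01.
  exact: differentiable_continuous (dphi t t01).
move: mvt; rewrite /phi scale1r scale0r addr0 subr0 mulr1 => ->.
by rewrite phi' // dfs.
Qed.

Lemma ratio_le_expR_segment (Q : 'rV[R]_d -> R) a v (s : R) :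
  (forall t, 0 <= t <= 1 ->
     0 < Q (a + t *: v) /\ differentiable (fun y => ln (Q y)) (a + t *: v)) ->
  (forall t, 0 <= t <= 1 -> enorm (grad (fun y => ln (Q y)) (a + t *: v)) <= s) ->
  Q (a + v) <= expR (enorm v * s) * Q a.
Proof.
move=> Qpos grad_le.
have ln_lip : `|ln (Q (a + v)) - ln (Q a)| <= enorm v * s.
  apply: (segment_mvt_le (fun y => ln (Q y))) => [t /Qpos[]//|t t01].
  apply: le_trans (normr_diff_le _ _ v (Qpos t t01).2) _.
  by rewrite ler_wpM2l ?enorm_ge0 ?grad_le.
have /Qpos[+ _] : 0 <= (0 : R) <= 1 by rewrite lexx ler01.
rewrite scale0r addr0 => Qa_gt0.
have /Qpos[+ _] : 0 <= (1 : R) <= 1 by rewrite lexx ler01.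
rewrite scale1r => Qav_gt0.
rewrite -(lnK Qa_gt0) -(lnK Qav_gt0) -expRD ler_expR.
by move: ln_lip; rewrite ler_distl => /andP[_]; lra.
Qed.

End segment.

Section support.
Context {R : realType} {d : nat} (mu : {measure set (Rd R d) -> \bar R}).

Lemma Rd_open_measurable {U : set ('rV[R]_d)} : open U -> measurable (U : set (Rd R d)).
Proof. exact: sub_sigma_algebra. Qed.

Definition rat_ball (qr : 'rV[rat]_d * rat) : set 'rV[R]_d :=
  ball (map_mx (@ratr R) qr.1) (ratr qr.2).

Lemma rat_ball_open qr : open (rat_ball qr).
Proof. exact: ball_open. Qed.

Lemma rat_ball_approx (x : 'rV[R]_d) {e : R} : 0 < e ->
  exists qr, rat_ball qr x /\ rat_ball qr `<=` ball x e.
Proof.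
move=> e_gt0.
have [r /[!in_itv] /= /andP[r_gt r_lt]] := @rat_in_itvoo R (e / 4) (e / 2) ltac:(lra).
have /choice[c cE] : forall i : 'I_d,
    exists q : rat, ratr q \in `](x 0 i - e / 4), (x 0 i + e / 4)[.
  by move=> i; apply: rat_in_itvoo; lra.
have near_center : ball (map_mx (@ratr R) (\row_i c i)) (e / 4) x.
  split; first lra.
  move=> i j; rewrite !mxE (ord1 i) /ball /=.
  by move: (cE j); rewrite in_itv /= ltr_distlC => /andP[? ?]; apply/andP; split; lra.
exists (\row_i c i, r); split.
- by apply: le_ball near_center; lra.
- move=> y y_in; apply: (@le_ball _ _ _ (e / 4 + ratr r)); first lra.
  exact: ball_triangle (ball_sym near_center) y_in.
Qed.

Variable p : 'rV[R]_d -> R.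
Hypotheses (p_meas : measurable_fun [set: Rd R d] p) (p_ge0 : forall x, 0 <= p x).

Lemma null_ball_negligible (U : set 'rV[R]_d) : open U ->
  (\int[mu]_(y in (U : set (Rd R d))) (p y)%:E <= 0)%E ->
  mu.-negligible (U `&` [set x | p x != 0] : set (Rd R d)).
Proof.
move=> oU intU_le0.
have mU := Rd_open_measurable oU.
have mpU : measurable_fun (U : set (Rd R d)) (fun x : Rd R d => (p x)%:E).
  by apply/measurable_EFinP; exact: measurable_funS p_meas.
have : (\int[mu]_(y in (U : set (Rd R d))) `|(p y)%:E| = 0)%E.
  under eq_integral do rewrite gee0_abs ?lee_fin //.
  by apply/eqP; rewrite eq_le intU_le0 integral_ge0 // => y _; rewrite lee_fin.
move/(ae_eq_integral_abs mu mU mpU); apply: negligibleS => x /= [Ux px_neq0].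
by move=> /(_ Ux) [] /eqP; rewrite (negbTE px_neq0).
Qed.

(* The rational balls form a countable base, so the complement of the support
   is covered by countably many p-null balls. *)
Lemma ae_in_supp : {ae mu, forall x : Rd R d, p x != 0 -> supp mu p x}.
Proof.
pose null qr := (\int[mu]_(y in (rat_ball qr : set (Rd R d))) (p y)%:E <= 0)%E.
pose F k : set (Rd R d) := if unpickle k is Some qr then
  if `[< null qr >] then rat_ball qr `&` [set x | p x != 0] else set0 else set0.
have F_negligible k : mu.-negligible (F k).
  rewrite /F; case: (unpickle k) => [qr|]; last exact: negligible_set0.
  case: asboolP => [null_qr|_]; last exact: negligible_set0.
  exact: null_ball_negligible (rat_ball_open qr) null_qr.
apply: negligibleS (negligible_bigcup F_negligible) => x /= /not_implyP[px_neq0].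
move=> /(contra_not (@subset_closure _ _ x)) /existsNP[U].
move=> /not_implyP[oU /not_implyP[Ux /negP]]; rewrite -leNgt => intU_le0.
have /nbhs_ballP[e /= e_gt0 eU] : nbhs x U by exact: open_nbhs_nbhs.
have [qr [qr_x qr_sub]] := rat_ball_approx x e_gt0.
exists (pickle qr) => //; rewrite /F pickleK; case: asboolP => [_|]; first by [].
case; apply: le_trans intU_le0; apply: ge0_subset_integral => //.
- exact: Rd_open_measurable (rat_ball_open qr).
- exact: Rd_open_measurable.
- by apply/measurable_EFinP; exact: measurable_funS p_meas.
- by move=> y _; rewrite lee_fin.
- by move=> y /qr_sub /eU.
Qed.

Lemma supp_nonempty : (\int[mu]_x (p x)%:E = 1)%E -> exists x, supp mu p x.
Proof.
move=> p_int; apply: contrapT => no_supp.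
have p_ae0 : {ae mu, forall x : Rd R d, p x = 0}.
  apply: filterS ae_in_supp => x x_supp; apply/eqP/negPn/negP => /x_supp.
  by move=> ?; apply: no_supp; exists x.
have : (\int[mu]_x (p x)%:E = \int[mu]_x (cst 0 x))%E.
  apply: ae_eq_integral => //; first exact/measurable_EFinP.
  by apply: filterS p_ae0 => x -> _.
by rewrite p_int integral0 => /eqP; rewrite eqe oner_eq0.
Qed.

End support.

Section deconvolution.
Context {R : realType} {d : nat} (mu : {measure set (Rd R d) -> \bar R}).
Variables (p Q : 'rV[R]_d -> R).
Hypotheses (p_meas : measurable_fun [set: Rd R d] p) (p_ge0 : forall x, 0 <= p x).
Hypotheses (Q_meas : measurable_fun [set: Rd R d] Q) (Q_ge0 : forall z, 0 <= Q z).

Lemma measurable_subr_Rd (y : 'rV[R]_d) :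
  measurable_fun [set: Rd R d] (fun x : Rd R d => (y - x : Rd R d)).
Proof.
apply: (measurability (open : set (set (Rd R d)))) => // _ [U oU <-].
rewrite setTI; apply: sub_sigma_algebra; apply: open_comp => // x _.
by apply: continuousB; [exact: cst_continuous | exact: cvg_id].
Qed.

Lemma integrable_weight (y : 'rV[R]_d) : (normc mu p Q y < +oo)%E ->
  mu.-integrable setT (EFin \o (fun x => Q (y - x) * p x)).
Proof.
move=> normc_fin; apply/integrableP; split.
  apply/measurable_EFinP; apply: measurable_funM => //.
  exact: measurableT_comp Q_meas (measurable_subr_Rd y).
rewrite (eq_integral (fun x : Rd R d => (Q (y - x) * p x)%:E)) // => x _.
by rewrite /comp abse_EFin ger0_norm // mulr_ge0.
Qed.

Lemma integral_cond_dens (y : 'rV[R]_d) (A : set (Rd R d)) :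
  (normc mu p Q y < +oo)%E -> measurable A ->
  (\int[mu]_(x in A) (cond_dens mu p Q y x)%:E =
   (\int[mu]_(x in A) (Q (y - x) * p x) / \int[mu]_x (Q (y - x) * p x))%:E)%E.
Proof.
move=> normc_fin mA.
have wA_int := integrableS measurableT mA (subsetT A) (integrable_weight y normc_fin).
rewrite EFinM fineK ?(integrable_fin_num mA wA_int) // -integralZr //.
by apply: eq_integral => x _; rewrite /cond_dens EFinM (mulrC (p x)).
Qed.

Lemma TV_cond_dens_le {y1 y2 : 'rV[R]_d} {rho : R} :
  (normc mu p Q y1 < +oo)%E -> (normc mu p Q y2 < +oo)%E -> 1 <= rho ->
  (forall x, supp mu p x -> Q (y1 - x) <= rho * Q (y2 - x)) ->
  (forall x, supp mu p x -> Q (y2 - x) <= rho * Q (y1 - x)) ->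
  (TV mu (cond_dens mu p Q y1) (cond_dens mu p Q y2) <= (1 - rho^-1)%:E)%E.
Proof.
move=> fin1 fin2 rho_ge1 Q12 Q21.
have ae_weight_le a b : (forall x, supp mu p x -> Q (a - x) <= rho * Q (b - x)) ->
    {ae mu, forall x, Q (a - x) * p x <= rho * (Q (b - x) * p x)}.
  move=> Qab; apply: filterS (ae_in_supp mu p p_meas p_ge0) => x x_supp.
  have [->|px_neq0] := eqVneq (p x) 0; first by rewrite !mulr0.
  by rewrite mulrA ler_wpM2r //; exact/Qab/x_supp.
have weight_ge0 y x : 0 <= Q (y - x) * p x by rewrite mulr_ge0.
apply: ge_ereal_sup => _ [A mA <-].
rewrite !integral_cond_dens // -EFinB abse_EFin lee_fin ler_norml.
rewrite lerNl opprB !Rintegral_ratio_sub_le ?integrable_weight //.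
all: exact: ae_weight_le.
Qed.


Lemma TV_cond_dens_le_enorm_mul (xt xt' : 'rV[R]_d) (s : R) :
  (normc mu p Q xt < +oo)%E -> (normc mu p Q xt' < +oo)%E -> 0 <= s ->
  (forall z, Xset mu p xt xt' z ->
     0 < Q z /\ differentiable (fun y => ln (Q y)) z) ->
  (forall z, Xset mu p xt xt' z -> enorm (grad (fun y => ln (Q y)) z) <= s) ->
  (TV mu (cond_dens mu p Q xt) (cond_dens mu p Q xt') <=
   (enorm (xt - xt') * s)%:E)%E.
Proof.
move=> fin fin' s_ge0 Qlog grad_le.
set L := enorm (xt - xt') * s.
have L_ge0 : 0 <= L by rewrite mulr_ge0 ?enorm_ge0.
have ratio y y' : enorm (y' - y) = enorm (xt - xt') ->
    (forall x t, supp mu p x -> 0 <= t <= 1 -> Xset mu p xt xt' (y - x + t *: (y' - y))) ->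
    forall x, supp mu p x -> Q (y' - x) <= expR L * Q (y - x).
  move=> yy' seg x x_supp.
  have := @ratio_le_expR_segment _ _ Q (y - x) (y' - y) s.
  rewrite yy' [y - x + _]addrC addrA subrK; apply=> t t01.
    exact/Qlog/seg.
  exact/grad_le/seg.
have seg_fwd x t : supp mu p x -> 0 <= t <= 1 ->
    Xset mu p xt xt' (xt - x + t *: (xt' - xt)).
  move=> x_supp t01; exists x, t; split=> //; split=> //.
  by apply/rowP => i; rewrite !mxE; ring.
have seg_bwd x t : supp mu p x -> 0 <= t <= 1 ->
    Xset mu p xt xt' (xt' - x + t *: (xt - xt')).
  move=> x_supp t01; exists x, (1 - t); split=> //; split; first lra.
  by apply/rowP => i; rewrite !mxE; ring.
apply: le_trans (TV_cond_dens_le fin fin' _ (ratio _ _ _ seg_bwd) (ratio _ _ _ seg_fwd)) _.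
- by have := expR_ge1Dx L; lra.
- by [].
- by rewrite -opprB enormN.
- by rewrite lee_fin -expRN; have := expR_ge1Dx (- L); lra.
Qed.

End deconvolution.

Theorem proposition16 (R : realType) (d : nat)
  (mu : probability (Rd R d) R)
  (lam : {measure set (Rd R d) -> \bar R})
  (Hlam : forall a b : 'rV[R]_d, (forall i, a 0 i <= b 0 i) ->
     lam [set x : Rd R d | forall i, a 0 i < x 0 i <= b 0 i]
       = (\prod_(i < d) (b 0 i - a 0 i))%:E)
  (p Q : 'rV[R]_d -> R)
  (p_meas : measurable_fun [set: Rd R d] p)
  (p_ge0 : forall x, 0 <= p x)
  (p_int : (\int[mu]_x (p x)%:E = 1)%E)
  (Q_meas : measurable_fun [set: Rd R d] Q)
  (Q_ge0 : forall z, 0 <= Q z)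
  (Q_int : (\int[lam]_z (Q z)%:E = 1)%E)
  (xt xt' : 'rV[R]_d)
  (Hfin : (normc mu p Q xt < +oo)%E /\ (normc mu p Q xt' < +oo)%E)
  (HQ2 : forall z, Xset mu p xt xt' z ->
     (\forall y \near z, differentiable Q y) /\
     (forall i : 'I_d, differentiable (fun y => derive Q y (evec R i)) z))
  (HQ2c : {within Xset mu p xt xt', continuous (hess Q)})
  (Hlog : forall z, Xset mu p xt xt' z ->
     0 < Q z /\ differentiable (fun y => ln (Q y)) z)
  (Hlogc : {within Xset mu p xt xt', continuous (grad (fun y => ln (Q y)))}) :
  (TV mu (cond_dens mu p Q xt) (cond_dens mu p Q xt')
   <= (enorm (xt - xt'))%:E *
      ereal_sup [set (enorm (grad (fun y => ln (Q y)) z))%:E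
                | z in Xset mu p xt xt'])%E.
Proof.
have [x0 x0_supp] := supp_nonempty mu p p_meas p_ge0 p_int.
have [fin fin'] := Hfin.
set S := ereal_sup _.
have S_ub z : Xset mu p xt xt' z -> ((enorm (grad (fun y => ln (Q y)) z))%:E <= S)%E.
  by move=> Xz; apply: ereal_sup_ubound; exists z.
have X0 : Xset mu p xt xt' (xt - x0).
  exists x0, 0; split=> //; split; first by rewrite lexx ler01.
  by apply/rowP => i; rewrite !mxE; ring.
have [<-|neq] := eqVneq xt xt'.
  have /eqP -> : enorm (xt - xt) == 0 by rewrite enorm_eq0 subrr.
  rewrite mul0e; apply: le_trans (TV_cond_dens_le mu p Q p_meas p_ge0 Q_meas Q_ge0
    fin fin (lexx 1) _ _) _; try by move=> x _; rewrite mul1r.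
  by rewrite invr1 subrr.
case Sdef : S S_ub => [s| |] S_ub.
- have grad_le z : Xset mu p xt xt' z -> enorm (grad (fun y => ln (Q y)) z) <= s.
    by move=> /S_ub; rewrite lee_fin.
  have s_ge0 : 0 <= s := le_trans (enorm_ge0 _) (grad_le _ X0).
  by rewrite -EFinM TV_cond_dens_le_enorm_mul.
- by rewrite gt0_muley ?leey // lte_fin lt_def enorm_ge0 andbT enorm_eq0 subr_eq0 neq.
- by have := S_ub _ X0; rewrite leeNy_eq.
Qed.
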